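(* If $M\approx N$ then $M\stackrel{\bullet}{\approx}N$.
   Context: Setting: a graph-based calculus for wireless networks with local broadcast. Networks are given by $M::=G\langle\Phi\rangle\mid M\backslash c\mid M\oplus_DN$. $G$ is a finite undirected graph of locations, $\Phi$ assigns sequential processes to locations, and $M(p)$ is the process at location $p$. Reduction semantics $M\to M'$ is defined by the following rules. - (R-Bcast): Suppose $M(p)=\overline c(e).P+R$ and ${\sf eval}(e)=v$. Let $L=\{q_i\mid p\frown_Mq_i,\ M(q_i)=c(x_i).Q_i+R_i\}$. Then $M\to M[p\mapsto P][q_i\mapsto Q_i\{v/x_i\}]_{q_i\in L}$. - Closure under $\oplus_D$: this applies when no node linked via $D$ can receive the broadcast. - Closure under restriction. - Closure under structural congruence $\equiv$. $\to^{\ast}$ is the reflexive-transitive closure of $\to$. Barb: $M\downarrow_{\overline c}$ if $M\equiv N\backslash I$, $c\notin I$, and $M(p)\equiv\overline c(e).P+R$ for some location $p$. A weak barbed bisimulation is a symmetric relation $\mathcal{B}$ such that, whenever $(M,N)\in\mathcal{B}$, both of the following hold: - $M\to M'$ implies $N\to^{\ast}N'$ with $(M',N')\in\mathcal{B}$ for some $N'$. - $M\downarrow_{\overline c}$ implies $N\to^{\ast}N'$ with $N'\downarrow_{\overline c}$ for some $N'$. $\stackrel{\bullet}{\approx}$ is the union of all weak barbed bisimulations. Labelled transitions $M\xrightarrow{\delta}M'$ have labels $\delta::=p:\alpha\mid\tau$ with $\alpha::=cv\mid\overline cv$. A label $p:\alpha$ is a receive or broadcast at $p$; a $\tau$ transition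 is a broadcast on a restricted channel. $M\xrightarrow{\tau^{\ast}}M'$ means a finite, possibly empty, sequence of $\tau$-steps. $M\stackrel{p:\alpha}{\Longrightarrow}M'$ means $M\xrightarrow{\tau^{\ast}}M_1\xrightarrow{p:\alpha}M_1'\xrightarrow{\tau^{\ast}}M'$ for some $M_1,M_1'$. A weak bisimulation is a localized relation $\mathcal{R}\subseteq{\bf Net}\times\mathcal{P}({\sf Loc}^2)\times{\bf Net}$ satisfying the following: - $E\subseteq|M|\times|N|$ for every $(M,E,N)\in\mathcal{R}$. - It is symmetric: $(M,E,N)\in\mathcal{R}$ implies $(N,E^{-1},M)\in\mathcal{R}$. - Whenever $(M,E,N)\in\mathcal{R}$, $M\xrightarrow{\tau}M'$ implies $N\xrightarrow{\tau^{\ast}}N'$ with $(M',E,N')\in\mathcal{R}$ for some $N'$. - Whenever $(M,E,N)\in\mathcal{R}$, $M\xrightarrow{p:\alpha}M'$ implies $N\stackrel{q:\alpha}{\Longrightarrow}N'$ for some $q$ with $(p,q)\in E$ and $(M',E,N')\in\mathcal{R}$. $M\approx N$ iff $(M,E,N)\in\mathcal{R}$ for some weak bisimulation $\mathcal{R}$ and some $E$. *)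

From Stdlib Require Import Relations.
From mathcomp Require Import all_boot.
Set Implicit Arguments.
Unset Strict Implicit.
Unset Printing Implicit Defensive.

Definition loc := nat.
Definition chan := nat.
Definition var := nat.
Definition val := nat.
Definition pvar := nat.

Inductive exp : Type :=
| EVal (v : val)
| EVar (x : var)
| EAdd (e1 e2 : exp).

(* eval is total; free variables (which never occur in closed, running
   processes) evaluate to the default value 0. *)
Fixpoint eval (e : exp) : val :=
  match e with
  | EVal v => v
  | EVar _ => 0
  | EAdd a b => eval a + eval b
  end.

Fixpoint esubst (e : exp) (x : var) (v : val) : exp :=
  match e with
  | EVal w => EVal w
  | EVar y => if y == x then EVal v else EVar y
  | EAdd a b => EAdd (esubst a x v) (esubst b x v)
  end.

Inductive proc : Type :=
| PNil
| POut (c : chan) (e : exp) (P : proc)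
| PIn (c : chan) (x : var) (P : proc)
| PSum (P Q : proc)
| PIf (e1 e2 : exp) (P Q : proc)
| PRec (X : pvar) (P : proc)
| PVar (X : pvar).

Fixpoint psubst (P : proc) (x : var) (v : val) : proc :=
  match P with
  | PNil => PNil
  | POut c e P1 => POut c (esubst e x v) (psubst P1 x v)
  | PIn c y P1 => if y == x then PIn c y P1 else PIn c y (psubst P1 x v)
  | PSum P1 P2 => PSum (psubst P1 x v) (psubst P2 x v)
  | PIf e1 e2 P1 P2 =>
      PIf (esubst e1 x v) (esubst e2 x v) (psubst P1 x v) (psubst P2 x v)
  | PRec X P1 => PRec X (psubst P1 x v)
  | PVar X => PVar X
  end.

Fixpoint psubstX (P : proc) (X : pvar) (Q : proc) : proc :=
  match P with
  | PNil => PNil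
  | POut c e P1 => POut c e (psubstX P1 X Q)
  | PIn c y P1 => PIn c y (psubstX P1 X Q)
  | PSum P1 P2 => PSum (psubstX P1 X Q) (psubstX P2 X Q)
  | PIf e1 e2 P1 P2 => PIf e1 e2 (psubstX P1 X Q) (psubstX P2 X Q)
  | PRec Y P1 => if Y == X then PRec Y P1 else PRec Y (psubstX P1 X Q)
  | PVar Y => if Y == X then Q else PVar Y
  end.

(* channel renaming P{b/a} (channels are never bound inside processes) *)
Fixpoint prename (a b : chan) (P : proc) : proc :=
  let r c := if c == a then b else c in
  match P with
  | PNil => PNil
  | POut c e P1 => POut (r c) e (prename a b P1)
  | PIn c y P1 => PIn (r c) y (prename a b P1)
  | PSum P1 P2 => PSum (prename a b P1) (prename a b P2)
  | PIf e1 e2 P1 P2 => PIf e1 e2 (prename a b P1) (prename a b P2)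
  | PRec X P1 => PRec X (prename a b P1)
  | PVar X => PVar X
  end.

Fixpoint pchans (P : proc) : seq chan :=
  match P with
  | PNil => [::]
  | POut c _ P1 => c :: pchans P1
  | PIn c _ P1 => c :: pchans P1
  | PSum P1 P2 => pchans P1 ++ pchans P2
  | PIf _ _ P1 P2 => pchans P1 ++ pchans P2
  | PRec _ P1 => pchans P1
  | PVar _ => [::]
  end.

Inductive pcong : proc -> proc -> Prop :=
| PC_refl P : pcong P P
| PC_sym P Q : pcong P Q -> pcong Q P
| PC_trans P Q R : pcong P Q -> pcong Q R -> pcong P R
| PC_sumC P Q : pcong (PSum P Q) (PSum Q P)
| PC_sumA P Q R : pcong (PSum (PSum P Q) R) (PSum P (PSum Q R))
| PC_sum0 P : pcong (PSum P PNil) P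
| PC_out c e P Q : pcong P Q -> pcong (POut c e P) (POut c e Q)
| PC_in c x P Q : pcong P Q -> pcong (PIn c x P) (PIn c x Q)
| PC_sum P P' Q : pcong P P' -> pcong (PSum P Q) (PSum P' Q)
| PC_if e1 e2 P P' Q Q' :
    pcong P P' -> pcong Q Q' -> pcong (PIf e1 e2 P Q) (PIf e1 e2 P' Q')
| PC_rec X P Q : pcong P Q -> pcong (PRec X P) (PRec X Q)
| PC_ifT e1 e2 P Q : eval e1 = eval e2 -> pcong (PIf e1 e2 P Q) P
| PC_ifF e1 e2 P Q : eval e1 <> eval e2 -> pcong (PIf e1 e2 P Q) Q
| PC_unfold X P : pcong (PRec X P) (psubstX P X (PRec X P)).

(* A finite undirected graph G is given by its finite list of nodes V and
   a finite list of edges Ed, read as unordered pairs (see adjG). *)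
Inductive net : Type :=
| NGraph (V : seq loc) (Ed : seq (loc * loc)) (F : loc -> proc)
| NRes (M : net) (c : chan)
| NPar (M : net) (D : seq (loc * loc)) (N : net).

Fixpoint restrs (M : net) (I : seq chan) : net :=
  match I with
  | [::] => M
  | c :: I' => restrs (NRes M c) I'
  end.

Fixpoint locs (M : net) : seq loc :=
  match M with
  | NGraph V _ _ => V
  | NRes M1 _ => locs M1
  | NPar M1 _ N1 => locs M1 ++ locs N1
  end.

Fixpoint proc_at (M : net) (p : loc) : option proc :=
  match M with
  | NGraph V _ F => if p \in V then Some (F p) else None
  | NRes M1 _ => proc_at M1 p
  | NPar M1 _ N1 => if p \in locs M1 then proc_at M1 p else proc_at N1 p
  end.

Definition linked (D : seq (loc * loc)) (p q : loc) : bool :=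
  ((p, q) \in D) || ((q, p) \in D).

Definition adjG (V : seq loc) (Ed : seq (loc * loc)) (p q : loc) : bool :=
  [&& p \in V, q \in V, p != q & linked Ed p q].

Fixpoint adj (M : net) (p q : loc) : bool :=
  match M with
  | NGraph V Ed _ => adjG V Ed p q
  | NRes M1 _ => adj M1 p q
  | NPar M1 D N1 =>
      [|| adj M1 p q, adj N1 p q
        | [&& p != q, linked D p q &
              ((p \in locs M1) && (q \in locs N1))
              || ((p \in locs N1) && (q \in locs M1))]]
  end.

Fixpoint free_at (M : net) (p : loc) (c : chan) : bool :=
  match M with
  | NGraph V _ _ => p \in V
  | NRes M1 d => (d != c) && free_at M1 p c
  | NPar M1 _ N1 => if p \in locs M1 then free_at M1 p c else free_at N1 p c
  end.

Fixpoint nocc (M : net) (d : chan) : bool :=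
  match M with
  | NGraph V _ F => has (fun q => d \in pchans (F q)) V
  | NRes M1 c => (c == d) || nocc M1 d
  | NPar M1 _ N1 => nocc M1 d || nocc N1 d
  end.

Fixpoint nfree (M : net) (d : chan) : bool :=
  match M with
  | NGraph V _ F => has (fun q => d \in pchans (F q)) V
  | NRes M1 c => (c != d) && nfree M1 d
  | NPar M1 _ N1 => nfree M1 d || nfree N1 d
  end.

Fixpoint nrename (a b : chan) (M : net) : net :=
  match M with
  | NGraph V Ed F => NGraph V Ed (fun q => prename a b (F q))
  | NRes M1 c => if c == a then NRes M1 c else NRes (nrename a b M1) c
  | NPar M1 D N1 => NPar (nrename a b M1) D (nrename a b N1)
  end.

Inductive netcong : net -> net -> Prop :=
| NC_refl M : netcong M M
| NC_sym M N : netcong M N -> netcong N M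
| NC_trans M N K : netcong M N -> netcong N K -> netcong M K
| NC_graph V Ed F F' :
    (forall q, q \in V -> pcong (F q) (F' q)) ->
    netcong (NGraph V Ed F) (NGraph V Ed F')
| NC_graph_iso V Ed V' Ed' F :
    V =i V' -> (forall p q, adjG V Ed p q = adjG V' Ed' p q) ->
    netcong (NGraph V Ed F) (NGraph V' Ed' F)
| NC_res M M' c : netcong M M' -> netcong (NRes M c) (NRes M' c)
| NC_parl M M' D N : netcong M M' -> netcong (NPar M D N) (NPar M' D N)
| NC_parr M D N N' : netcong N N' -> netcong (NPar M D N) (NPar M D N')
| NC_parC M D N : netcong (NPar M D N) (NPar N D M)
| NC_resC M c d : netcong (NRes (NRes M c) d) (NRes (NRes M d) c)
| NC_extr M c D N :
    ~~ nfree N c -> netcong (NPar (NRes M c) D N) (NRes (NPar M D N) c)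
| NC_alpha M c d :
    ~~ nocc M d -> netcong (NRes M c) (NRes (nrename c d M) d).

Fixpoint nrel (Rl : loc -> proc -> proc -> Prop) (M M' : net) : Prop :=
  match M, M' with
  | NGraph V Ed F, NGraph V' Ed' F' =>
      [/\ V' = V, Ed' = Ed &
          forall q, if q \in V then Rl q (F q) (F' q) else F' q = F q]
  | NRes M1 c, NRes M1' c' => c' = c /\ nrel Rl M1 M1'
  | NPar M1 D N1, NPar M1' D' N1' => [/\ D' = D, nrel Rl M1 M1' & nrel Rl N1 N1']
  | _, _ => False
  end.

Definition listens (P : proc) (c : chan) : Prop :=
  exists x Q R, pcong P (PSum (PIn c x Q) R).

(* a node with process X, which hears (b = true) or does not hear a
   broadcast of v on c, evolves into X' *)
Definition hear (b : bool) (c : chan) (v : val) (X X' : proc) : Prop :=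
  (b /\ exists x Q R, pcong X (PSum (PIn c x Q) R) /\ X' = psubst Q x v)
  \/ (~ (b /\ listens X c) /\ X' = X).

Definition can_recv (N : net) (q : loc) (c : chan) : Prop :=
  free_at N q c /\ exists X, proc_at N q = Some X /\ listens X c.

(* (R-Bcast): M(p) ≡ \overline c(e).P + R, eval e = v, and M' is
   M[p ↦ P][q_i ↦ Q_i{v/x_i}] for the neighbours q_i of p listening on c *)
Definition bcast (M : net) (p : loc) (c : chan) (v : val) (M' : net) : Prop :=
  exists X e P R,
    [/\ proc_at M p = Some X, pcong X (PSum (POut c e P) R),
        free_at M p c, eval e = v &
        nrel (fun q X0 X1 =>
                if q == p then X1 = P
                else hear (adj M p q && free_at M q c) c v X0 X1) M M'].

Definition recv_at (M : net) (p : loc) (c : chan) (v : val) (M' : net) : Prop :=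
  exists X x Q R,
    [/\ proc_at M p = Some X, pcong X (PSum (PIn c x Q) R),
        free_at M p c &
        nrel (fun q X0 X1 => if q == p then X1 = psubst Q x v else X1 = X0)
          M M'].

Definition no_D_receiver (D : seq (loc * loc)) (N : net) (p : loc) (c : chan) : Prop :=
  ~ (exists q, [/\ q \in locs N, linked D p q & can_recv N q c]).

(* Reduction semantics.  The label records the broadcast (sender and
   channel) when its channel is visible at this level, None when it has
   been hidden by a restriction. *)

Definition hide (d : chan) (l : option (loc * chan)) : option (loc * chan) :=
  match l with
  | Some (p, c) => if c == d then None else Some (p, c)
  | None => None
  end.

Inductive bred : net -> option (loc * chan) -> net -> Prop :=
| R_Bcast M p c v M' : bcast M p c v M' -> bred M (Some (p, c)) M'
| R_Res M d l M' : bred M l M' -> bred (NRes M d) (hide d l) (NRes M' d)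
| R_Par M D N l M' :
    bred M l M' ->
    (forall p c, l = Some (p, c) -> no_D_receiver D N p c) ->
    bred (NPar M D N) l (NPar M' D N)
| R_Struct M M1 l M1' M' :
    netcong M M1 -> bred M1 l M1' -> netcong M1' M' -> bred M l M'.

Definition red (M M' : net) : Prop := exists l, bred M l M'.
Definition reds : net -> net -> Prop := clos_refl_trans net red.

Definition barb (M : net) (c : chan) : Prop :=
  exists N I p X e P R,
    [/\ netcong M (restrs N I), c \notin I, proc_at N p = Some X,
        free_at N p c & pcong X (PSum (POut c e P) R)].

Definition weak_barbed_bisim (B : net -> net -> Prop) : Prop :=
  [/\ (forall M N, B M N -> B N M),
      (forall M N M', B M N -> red M M' -> exists N', reds N N' /\ B M' N') &
      (forall M N c, B M N -> barb M c -> exists N', reds N N' /\ barb N' c)].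

Definition wb_barbed (M N : net) : Prop :=
  exists B, weak_barbed_bisim B /\ B M N.

Inductive act : Type :=
| AIn (c : chan) (v : val)
| AOut (c : chan) (v : val).

Inductive label : Type :=
| LAct (p : loc) (a : act)
| LTau.

Definition act_chan (a : act) : chan :=
  match a with AIn c _ => c | AOut c _ => c end.

Definition label_on (l : label) (d : chan) : bool :=
  match l with LAct _ a => act_chan a == d | LTau => false end.

Inductive lts : net -> label -> net -> Prop :=
| L_Out M p c v M' : bcast M p c v M' -> lts M (LAct p (AOut c v)) M'
| L_In M p c v M' : recv_at M p c v M' -> lts M (LAct p (AIn c v)) M'
| L_Hide M p c v M' :
    lts M (LAct p (AOut c v)) M' -> lts (NRes M c) LTau (NRes M' c)
| L_Res M d l M' :
    lts M l M' -> ~~ label_on l d -> lts (NRes M d) l (NRes M' d)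
| L_Par M D N l M' :
    lts M l M' ->
    (forall p c v, l = LAct p (AOut c v) -> no_D_receiver D N p c) ->
    lts (NPar M D N) l (NPar M' D N)
| L_Struct M M1 l M1' M' :
    netcong M M1 -> lts M1 l M1' -> netcong M1' M' -> lts M l M'.

Definition taus : net -> net -> Prop :=
  clos_refl_trans net (fun A B => lts A LTau B).

Definition wlts (M : net) (p : loc) (a : act) (M' : net) : Prop :=
  exists M1 M1', [/\ taus M M1, lts M1 (LAct p a) M1' & taus M1' M'].

Definition weak_bisim (R : net -> (loc -> loc -> Prop) -> net -> Prop) : Prop :=
  [/\ (forall M E N, R M E N -> forall p q, E p q -> p \in locs M /\ q \in locs N),
      (forall M E N, R M E N -> R N (fun q p => E p q) M),
      (forall M E N M', R M E N -> lts M LTau M' ->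
          exists N', taus N N' /\ R M' E N') &
      (forall M E N p a M', R M E N -> lts M (LAct p a) M' ->
          exists q N', [/\ E p q, wlts N q a N' & R M' E N'])].

Definition wbisimilar (M N : net) : Prop :=
  exists R E, weak_bisim R /\ R M E N.

(* Reductions are exactly the tau- and output transitions of the labelled
   semantics, and M has a barb on c exactly when it can perform an output
   transition on c.  Hence a weak bisimulation answers a reduction of M by a
   weak tau- or output transition of N, which is a sequence of reductions, and
   answers a barb of M (an output of M) by a weak output of N, whose last
   tau-prefix reaches a network exhibiting the same barb. *)
From Stdlib Require Import Relations Classical ClassicalEpsilon.
From mathcomp Require Import all_boot.
Set Implicit Arguments.
Unset Strict Implicit.
Unset Printing Implicit Defensive.

Lemma lts_bred M l M' : lts M l M' ->
  match l with
  | LTau => bred M None M'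
  | LAct p (AOut c _) => bred M (Some (p, c)) M'
  | LAct _ (AIn _ _) => True
  end.
Proof.
elim=> {M l M'} [M p c v M' Hb | // | M p c v M' _ IH | M d l M' _ IH Hd
  | M D N l M' _ IH HD | M M1 l M1' M' HM _ IH HM'].
- exact: R_Bcast Hb.
- by have := R_Res c IH; rewrite /= eqxx.
- case: l IH Hd => [p [c v|c v]|] //= IH Hd; last exact: (R_Res d IH).
  by have := R_Res d IH; rewrite /= (negbTE Hd).
- case: l IH HD => [p [c v|c v]|] //= IH HD; apply: R_Par IH _ => // p' c'.
  by case=> <- <-; exact: HD v erefl.
- by case: l IH => [p [c v|c v]|] //= IH; apply: R_Struct HM IH HM'.
Qed.

Lemma taus_reds M N : taus M N -> reds M N.
Proof.
elim=> [A B Hstep | A | A B C _ HAB _ HBC].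
- by apply: rt_step; exists None; exact: lts_bred Hstep.
- exact: rt_refl.
- exact: rt_trans HAB HBC.
Qed.

Lemma wlts_out_reds N q c v N' : wlts N q (AOut c v) N' -> reds N N'.
Proof.
case=> N1 [N1' [H1 Hout H2]].
apply: rt_trans (taus_reds H1) _; apply: rt_trans _ (taus_reds H2).
by apply: rt_step; exists (Some (q, c)); exact: lts_bred Hout.
Qed.

Lemma bred_lts M l M' : bred M l M' ->
  match l with
  | None => lts M LTau M'
  | Some (p, c) => exists v, lts M (LAct p (AOut c v)) M'
  end.
Proof.
elim=> {M l M'} [M p c v M' Hb | M d l M' _ IH | M D N l M' _ IH HD
  | M M1 l M1' M' HM _ IH HM'].
- by exists v; exact: L_Out.
- case: l IH => [[p c] [v Hv]|Htau]; last exact: L_Res Htau _.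
  have [<-|ncd] := eqVneq c d; first by rewrite /hide eqxx; exact: L_Hide Hv.
  by rewrite /hide (negbTE ncd); exists v; apply: L_Res; rewrite //= ncd.
- case: l IH HD => [[p c] [v Hv]|Htau] HD.
    by exists v; apply: L_Par Hv _ => p' c' v' [<- <- _]; exact: HD.
  exact: L_Par Htau _.
- case: l IH => [[p c] [v Hv]|Htau].
    by exists v; apply: L_Struct HM Hv HM'.
  exact: L_Struct HM Htau HM'.
Qed.

Lemma red_lts M M' : red M M' ->
  lts M LTau M' \/ exists p c v, lts M (LAct p (AOut c v)) M'.
Proof.
case=> [[[p c]|]] /bred_lts; last by left.
by case=> v Hv; right; exists p, c, v.
Qed.

Definition exposes_out (K : net) (c : chan) : Prop :=
  exists p X e P R, [/\ proc_at K p = Some X, free_at K p c &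
                        pcong X (PSum (POut c e P) R)].

Lemma exposes_out_barb M K c : netcong M K -> exposes_out K c -> barb M c.
Proof.
move=> HMK [p [X [e [P [R [HX Hfree Hcong]]]]]].
by exists K, [::], p, X, e, P, R.
Qed.

Lemma proc_at_locs M p X : proc_at M p = Some X -> p \in locs M.
Proof.
elim: M => [V Ed F | M IH d | M1 IH1 D M2 IH2] /=.
- by case: (p \in V).
- exact: IH.
- rewrite mem_cat; case: (p \in locs M1) => // /IH2 ->; exact: orbT.
Qed.

Lemma lts_out_exposes M q c v M' :
  lts M (LAct q (AOut c v)) M' -> exists K, netcong M K /\ exposes_out K c.
Proof.
move El: (LAct q (AOut c v)) => l H; elim: H El => {M l M'}
  [M p c' v' M' Hb | // | // | M d l M' _ IH Hd | M D N l M' _ IH _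
  | M M1 l M1' M' HM _ IH _] El.
- case: El => _ -> _; case: Hb => X [e [P [R [HX HXcong Hfree _ _]]]].
  by exists M; split; [exact: NC_refl | exists p, X, e, P, R].
- case: (IH El) => K [HK [p [X [e [P [R [HX Hfree Hcong]]]]]]].
  exists (NRes K d); split; first exact: NC_res.
  exists p, X, e, P, R; split=> //=; rewrite Hfree andbT.
  by move: Hd; rewrite -El /= eq_sym.
- case: (IH El) => K [HK [p [X [e [P [R [HX Hfree Hcong]]]]]]].
  exists (NPar K D N); split; first exact: NC_parl.
  by exists p, X, e, P, R; rewrite /= (proc_at_locs HX).
- case: (IH El) => K [HK HKc].
  by exists K; split=> //; exact: NC_trans HM HK.
Qed.

Lemma lts_out_barb M q c v M' : lts M (LAct q (AOut c v)) M' -> barb M c.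
Proof. by case/lts_out_exposes=> K [HMK HK]; exact: exposes_out_barb HMK HK. Qed.

Lemma nrel_total (Rl : loc -> proc -> proc -> Prop) :
  (forall q X, exists X', Rl q X X') -> forall M, exists M', nrel Rl M M'.
Proof.
move=> Htot; have [f Hf] := choice (fun qX X' => Rl qX.1 qX.2 X')
  (fun qX => Htot qX.1 qX.2).
elim=> [V Ed F | M [M' HM] d | M1 [M1' H1] D M2 [M2' H2]].
- exists (NGraph V Ed (fun q => if q \in V then f (q, F q) else F q)).
  by split=> // q; case: (q \in V); [exact: Hf (q, F q) |].
- by exists (NRes M' d).
- by exists (NPar M1' D M2').
Qed.

Lemma hear_total b c v X : exists X', hear b c v X X'.
Proof.
have [[Hb [x [Q [R HX]]]]|Hnot] := classic (b /\ listens X c).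
- by exists (psubst Q x v); left; split=> //; exists x, Q, R.
- by exists X; right.
Qed.

Lemma bcast_exists N p X c e P R :
  proc_at N p = Some X -> free_at N p c -> pcong X (PSum (POut c e P) R) ->
  exists N', bcast N p c (eval e) N'.
Proof.
move=> HX Hfree Hcong.
have [N' HN'] : exists N', nrel (fun q X0 X1 =>
  if q == p then X1 = P
  else hear (adj N p q && free_at N q c) c (eval e) X0 X1) N N'.
  apply: nrel_total => q X0.
  by case: (q == p); [exists P | exact: hear_total].
by exists N', X, e, P, R.
Qed.

Lemma restrs_lts I N l N' : lts N l N' ->
  (forall d, d \in I -> ~~ label_on l d) -> lts (restrs N I) l (restrs N' I).
Proof.
elim: I N N' => [// | d I IH] N N' HN HI /=.
apply: IH => [|d' HId']; last by apply: HI; rewrite inE HId' orbT.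
by apply: L_Res HN _; apply: HI; rewrite inE eqxx.
Qed.

Lemma barb_lts M c : barb M c -> exists p v M', lts M (LAct p (AOut c v)) M'.
Proof.
case=> N [I [p [X [e [P [R [HMN HcI HX Hfree Hcong]]]]]]].
have [N' HN'] := bcast_exists HX Hfree Hcong.
exists p, (eval e), (restrs N' I).
apply: L_Struct HMN _ (NC_refl _); apply: restrs_lts => [|d HdI].
  exact: L_Out HN'.
by apply: contraNN HcI => /= /eqP ->.
Qed.

Lemma wbisimilar_sym M N : wbisimilar M N -> wbisimilar N M.
Proof.
case=> R [E [HR HMN]]; exists R, (fun q p => E p q); split=> //.
by case: HR => _ Hsym _ _; exact: Hsym.
Qed.

Lemma wbisimilar_red M N M' :
  wbisimilar M N -> red M M' -> exists N', reds N N' /\ wbisimilar M' N'.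
Proof.
case=> R [E [HR HMN]] /red_lts [Htau | [p [c [v Hout]]]];
  case: (HR) => _ _ Hsim_tau Hsim_act.
- have [N' [HN' HR']] := Hsim_tau _ _ _ _ HMN Htau.
  by exists N'; split; [exact: taus_reds | exists R, E].
- have [q [N' [_ HN' HR']]] := Hsim_act _ _ _ _ _ _ HMN Hout.
  by exists N'; split; [exact: wlts_out_reds HN' | exists R, E].
Qed.

Lemma wbisimilar_barb M N c :
  wbisimilar M N -> barb M c -> exists N', reds N N' /\ barb N' c.
Proof.
case=> R [E [[_ _ _ Hsim_act] HMN]] /barb_lts [p [v [M' Hout]]].
have [q [N' [_ [N1 [N1' [HN1 HN1' _]]] _]]] := Hsim_act _ _ _ _ _ _ HMN Hout.
by exists N1; split; [exact: taus_reds | exact: lts_out_barb HN1'].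
Qed.

Lemma weak_barbed_bisim_wbisimilar : weak_barbed_bisim wbisimilar.
Proof.
split; [exact: wbisimilar_sym | exact: wbisimilar_red | exact: wbisimilar_barb].
Qed.

Theorem proposition4 : forall M N : net, wbisimilar M N -> wb_barbed M N.
Proof.
move=> M N HMN; exists wbisimilar; split=> //.
exact: weak_barbed_bisim_wbisimilar.
Qed.
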